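(* Let $r=r(n)\ge3$ and $m=m(n)$ be integers with $r=o(n^{1/2})$ and $\log(r^{-2}n)\le m=O(r^{-2}n)$. Then, as $n\to\infty$, \[ \frac{|\mathcal{H}^+_r(n,m)|}{|\mathcal{H}_r(n,m)|}=1-O\Bigl(\frac{r^6m^2}{n^3}\Bigr),\qquad \frac{|\mathcal{H}^{++}_r(n,m)|}{|\mathcal{H}_r(n,m)|}=1-O\Bigl(\frac{r^6m^2}{n^3}\Bigr). \]
   Context: $\mathcal{H}_r(n,m)$ is the set of $r$-uniform hypergraphs on $[n]$ with exactly $m$ edges. For such $H$, two edges are linked if they share exactly two vertices. Let $G_H$ be the graph whose vertices are the edges of $H$, two adjacent iff linked; a cluster of $H$ is the sub-hypergraph formed by the edges of a connected component of $G_H$ with at least two vertices. Set $M_0^*=\lceil\log(r^{-2}n)\rceil$, $M_0=M_0^*+2$, $M_4=\lceil\log(r^{-2}n)\rceil$ ($\log$ natural). $\mathcal{H}^+_r(n,m)$ is the set of $H\in\mathcal{H}_r(n,m)$ such that: (a) any two edges share at most two vertices; (b) every cluster consists of exactly two edges; (c) any two distinct clusters are vertex-disjoint; (d) there are at most $M_4$ clusters; (e) every vertex has degree at most $M_0$. $\mathcal{H}^{++}_r(n,m)$ is the subset of $\mathcal{H}^+_r(n,m)$ in which every vertex has degree at most $M_0^*$. *)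

From mathcomp Require Import all_boot.
From Stdlib Require Import Reals ZArith.

Set Implicit Arguments.
Unset Strict Implicit.
Unset Printing Implicit Defensive.

Section Hypergraphs.
Variable n : nat.

Definition hgraph := {set {set 'I_n}}.

Definition Hr (r m : nat) : {set hgraph} :=
  [set H : hgraph | [forall e in H, #|e| == r] && (#|H| == m)].

Definition linked (H : hgraph) : rel {set 'I_n} :=
  fun e f => [&& e \in H, f \in H, e != f & #|e :&: f| == 2].

Definition comp (H : hgraph) (e : {set 'I_n}) : {set {set 'I_n}} :=
  [set f | connect (linked H) e f].

Definition clusters (H : hgraph) : {set {set {set 'I_n}}} :=
  [set comp H e | e in H & 1 < #|comp H e|].

Definition vset (C : {set {set 'I_n}}) : {set 'I_n} := \bigcup_(e in C) e.

Definition degree (H : hgraph) (v : 'I_n) : nat := #|[set e in H | v \in e]|.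

(* conditions (a)-(e), with degree bound Mdeg and cluster-number bound Mcl *)
Definition good (Mdeg Mcl : nat) (H : hgraph) : bool :=
  [&& [forall e in H, forall f in H, (e != f) ==> (#|e :&: f| <= 2)],
      [forall C in clusters H, #|C| == 2],
      [forall C in clusters H, forall D in clusters H,
          (C != D) ==> [disjoint vset C & vset D]],
      #|clusters H| <= Mcl &
      [forall v, degree H v <= Mdeg]].

Definition card_H (r m : nat) : nat := #|Hr r m|.
Definition card_Hgood (r m Mdeg Mcl : nat) : nat :=
  #|[set H in Hr r m | good Mdeg Mcl H]|.

End Hypergraphs.

Local Open Scope R_scope.

(* ceiling of a real number: ceil x = 1 - up(-x) (up y is the least integer > y) *)
Definition Rceil (x : R) : Z := (1 - up (- x))%Z.

(* ceil(log(r^-2 n)) with natural log; truncated at 0 (only relevant when n < r^2) *)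
Definition ceil_log (n r : nat) : nat :=
  Z.to_nat (Rceil (ln (INR n / (INR r ^ 2)))).

Definition M0star (n r : nat) : nat := ceil_log n r.
Definition M0 (n r : nat) : nat := (ceil_log n r + 2)%nat.
Definition M4 (n r : nat) : nat := ceil_log n r.

Definition card_Hplus (n r m : nat) : nat := card_Hgood n r m (M0 n r) (M4 n r).
Definition card_Hplusplus (n r m : nat) : nat :=
  card_Hgood n r m (M0star n r) (M4 n r).

(* The proof is a first-moment argument.  Put k = ceil(log(n / r^2)).  A
   hypergraph of H_r(n,m) outside H^{++} contains one of five configurations
   of edges: two edges sharing at least three vertices (violating (a)), a
   linked path e ~ f ~ g (a cluster with more than two edges, (b)), two linked
   pairs whose vertex sets meet (c), k+1 pairwise disjoint linked pairs (d), or
   k+1 edges through one vertex (e).  A fixed set of j edges lies in a uniform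
   m-set of the C(n,r) possible edges with probability at most (m/C(n,r))^j,
   so counting the configurations bounds the proportion of bad hypergraphs by
   the sum [expected_configs] of their expected numbers.  Since H^{++} is contained in H^+, both ratios are
   within [expected_configs] of 1.  The remaining real analysis shows that
   [expected_configs] is O(r^6 m^2 / n^3) when n >= 4 r^2 and m = O(n / r^2):
   the last two terms are small because (k+1)! dominates e^k >= n / r^2
   ([cluster_tail], [star_tail], [expected_configs_small]). *)

From Pilot Require Import Defs.
From Stdlib Require Import Reals ZArith Lra Lia Factorial.
From mathcomp Require all_boot zify.

Local Open Scope R_scope.

Lemma Rdiv_nonneg (a b : R) : 0 <= a -> 0 < b -> 0 <= a / b.
Proof. intros ha hb; apply Rmult_le_pos; [exact ha | left; apply Rinv_0_lt_compat, hb]. Qed.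

Lemma relative_error (T P B X : R) :
  0 < T -> T - B <= P <= T -> B <= T * X -> Rabs (P / T - 1) <= X.
Proof.
intros hT [hlo hhi] hB.
assert (e : P / T - 1 = (P - T) / T) by (field; lra).
rewrite e; apply Rabs_le; split.
- apply (Rmult_le_reg_r T); [exact hT |].
  replace ((P - T) / T * T) with (P - T) by (field; lra); lra.
- apply Rle_trans with 0; [| nra].
  apply (Rmult_le_reg_r T); [exact hT |].
  replace ((P - T) / T * T) with (P - T) by (field; lra); lra.
Qed.

(* Sum of the expected numbers of the five forbidden configurations, in terms
   of tau = r^6 m^2 / n^3, y = m r^2 / n and w = r m / n. *)
Definition expected_configs (Nn Rr M : R) (k : nat) : R :=
  let tau := Rr ^ 6 * M ^ 2 / Nn ^ 3 in
  let y := M * Rr ^ 2 / Nn in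
  let w := Rr * M / Nn in
  tau + tau * y + tau * y ^ 2 + (y ^ 2) ^ S k / INR (fact (S k))
    + Nn * w ^ S k / INR (fact (S k)).

Close Scope R_scope.

Module HypergraphCounting.
Import all_boot zify.
Set Implicit Arguments.
Unset Strict Implicit.
Unset Printing Implicit Defensive.

Lemma union_bound (T I : finType) (A : {set T}) (J : {set I}) (B : I -> {set T}) :
  (forall x, x \in A -> exists2 i, i \in J & x \in B i) ->
  #|A| <= \sum_(i in J) #|B i|.
Proof.
move=> cover; rewrite -sum1_card.
apply: (@leq_trans (\sum_(x in A) \sum_(i in J) (x \in B i))).
  apply: leq_sum => x xA; have [i iJ xB] := cover x xA.
  by rewrite (bigD1 i) //= xB.
rewrite exchange_big; apply: leq_sum => i _.
rewrite -sum1_card [X in _ <= X]big_mkcond /=.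
apply: (@leq_trans (\sum_x (x \in B i))).
  by rewrite [X in _ <= X](bigID (mem A)) /= leq_addr.
by apply: eq_leq; apply: eq_bigr => x _; case: (x \in B i).
Qed.

Lemma pick_subset (T : finType) (A : {set T}) t :
  t <= #|A| -> exists2 S : {set T}, S \subset A & #|S| = t.
Proof.
elim: t => [|t IH] ht; first by exists set0; rewrite ?sub0set ?cards0.
have [S SA cS] := IH (ltnW ht).
have : 0 < #|A :\: S| by rewrite cardsD (setIidPr SA) cS subn_gt0.
case/card_gt0P => x; rewrite inE => /andP [xS xA].
exists (x |: S); first by rewrite subUset sub1set xA.
by rewrite cardsU1 xS cS.
Qed.

Lemma pair_count (T1 T2 : finType) (P : pred T1) (R : T1 -> pred T2) b :
  (forall x, P x -> #|[set y | R x y]| <= b) ->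
  #|[set p : T1 * T2 | P p.1 && R p.1 p.2]| <= #|[set x | P x]| * b.
Proof.
move=> fibre; rewrite -sum1_card.
have -> : \sum_(p in [set p : T1 * T2 | P p.1 && R p.1 p.2]) 1 =
          \sum_(x | P x) \sum_(y | R x y) 1.
  by rewrite pair_big_dep; apply: eq_bigl => p; rewrite inE.
rewrite -sum_nat_const [X in _ <= X](eq_bigl P); last by move=> x; rewrite inE.
apply: leq_sum => x Px; apply: leq_trans (fibre x Px).
by rewrite -sum1_card; apply: eq_leq; apply: eq_bigl => y; rewrite inE.
Qed.

Lemma connect_invariant (T : finType) (R : rel T) (a : pred T) x y :
  (forall u v, a u -> R u v -> a v) -> a x -> connect R x y -> a y.
Proof.
move=> step ax /connectP [p pth ->]; elim: p x ax pth => [|z p IH] x ax //=.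
by case/andP => Rxz pz; apply: IH pz; apply: step Rxz.
Qed.

Lemma card_set3 (T : finType) (a b c : T) :
  a != b -> a != c -> b != c -> #|[set a; b; c]| = 3.
Proof.
move=> ab ac bc; rewrite setUC cardsU1 cards2 ab !inE.
by rewrite !(eq_sym c) (negbTE ac) (negbTE bc).
Qed.

Lemma card_set4 (T : finType) (a b c d : T) : a != b -> a != c -> a != d ->
  b != c -> b != d -> c != d -> #|[set a; b; c; d]| = 4.
Proof.
move=> ab ac ad bc bd cd; rewrite setUC cardsU1 card_set3 // !inE.
by rewrite !(eq_sym d) (negbTE ad) (negbTE bd) (negbTE cd).
Qed.

Lemma leq_expn_base a b e : a <= b -> a ^ e <= b ^ e.
Proof. by move=> ab; elim: e => [|e IH] //; rewrite !expnS leq_mul. Qed.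

(* supsets N m j is the number of m-subsets of an N-set containing a fixed
   j-subset; it is the number of hypergraphs (m-sets of edges) containing a
   prescribed configuration of j edges. *)
Definition supsets (N m j : nat) : nat :=
  if (j <= m) && (m <= N) then 'C(N - j, m - j) else 0.

Lemma supsets_le_bin N m j : supsets N m j <= 'C(N - j, m - j).
Proof. by rewrite /supsets; case: ifP. Qed.

(* The probability bound: a fixed j-set lies in a uniform random m-subset of
   an N-set with probability at most (m/N)^j. *)
Lemma supsets_bound j : forall N m, supsets N m j * N ^ j <= 'C(N, m) * m ^ j.
Proof.
(* Induction on j, peeling off one element with (N+1) C(N, m) = (m+1) C(N+1, m+1). *)
rewrite /supsets; elim: j => [|j IH] N m.
  by case: ifP; rewrite ?leq0n // !subn0 !expn0.
case: leqP => jm //=; case: m jm => // m jm; rewrite ltnS in jm.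
case: N => [|N]; first by rewrite exp0n // muln0.
rewrite !subSS ltnS; case: (leqP m N) => mN //=.
have IHj := IH N m; rewrite jm mN /= in IHj.
have key : 'C(N - j, m - j) * N.+1 ^ j <= 'C(N, m) * m.+1 ^ j.
  case: N mN IHj => [|N] mN IHj.
    have m0 : m = 0 by apply/eqP; rewrite -leqn0.
    by subst m; have j0 : j = 0 by apply/eqP; rewrite -leqn0.
  rewrite -(@leq_pmul2r (N.+1 ^ j)) ?expn_gt0 //.
  apply: (@leq_trans ('C(N.+1, m) * m ^ j * N.+2 ^ j)).
    by rewrite mulnAC leq_mul2r IHj orbT.
  rewrite -!mulnA leq_mul2l -!expnMn; apply/orP; right.
  by apply: leq_expn_base; nia.
have diag := mul_bin_diag N.+1 m; rewrite /= in diag.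
rewrite !expnS; apply: (@leq_trans (N.+1 * ('C(N, m) * m.+1 ^ j))).
  by rewrite mulnCA leq_mul2l key orbT.
by rewrite mulnA diag [m.+1 * _]mulnC -mulnA.
Qed.

(* The t-subsets of U containing S inject into the (t - #|S|)-subsets of
   U :\: S via A |-> A :\: S. *)
Lemma card_supsets (T : finType) (U S : {set T}) t : S \subset U ->
  #|[set A : {set T} | [&& A \subset U, #|A| == t & S \subset A]]|
    <= supsets #|U| t #|S|.
Proof.
move=> SU; rewrite /supsets.
case: ifP => [/andP [jt tU] | small].
  set D := [set A : {set T} | A \subset U :\: S & #|A| == t - #|S|].
  have cD : #|D| = 'C(#|U| - #|S|, t - #|S|).
    by rewrite cards_draws cardsD (setIidPr SU).
  set Sup := [set A : {set T} | [&& A \subset U, #|A| == t & S \subset A]].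
  apply: (@leq_trans #|[set A :\: S | A in Sup]|).
    rewrite card_in_imset // => A1 A2.
    rewrite !inE => /and3P [_ _ S1] /and3P [_ _ S2] eq12.
    by rewrite -(setID A1 S) -(setID A2 S) (setIidPr S1) (setIidPr S2) eq12.
  rewrite -cD; apply: subset_leq_card; apply/subsetP => B /imsetP [A].
  rewrite inE => /and3P [AU /eqP cA SA] ->.
  by rewrite inE setSD //= cardsD (setIidPr SA) cA.
rewrite leqn0 cards_eq0; apply/eqP/setP => A; rewrite !inE.
apply/negbTE/negP => /and3P [AU /eqP cA SA].
move/negbT: small; rewrite negb_and -!ltnNge => /orP [] lt.
  by have := subset_leq_card SA; rewrite cA leqNgt lt.
by have := subset_leq_card AU; rewrite cA leqNgt lt.
Qed.

Section Edges.
Variable n : nat.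
Local Notation E := {set 'I_n}.

Definition rsets r : {set E} := [set e : E | #|e| == r].

Lemma card_rsets r : #|rsets r| = 'C(n, r).
Proof. by rewrite card_draws card_ord. Qed.

Lemma HrE r m : Hr n r m = [set H : {set E} | H \subset rsets r & #|H| == m].
Proof.
apply/setP => H; rewrite !inE; congr andb.
apply/forallP/subsetP => h e; first by move=> eH; have := h e; rewrite eH inE.
by apply/implyP => eH; have := h e eH; rewrite inE.
Qed.

Lemma card_Hr r m : #|Hr n r m| = 'C('C(n, r), m).
Proof. by rewrite HrE cards_draws card_rsets. Qed.

Lemma Hr_edge r m H e : H \in Hr n r m -> e \in H -> e \in rsets r.
Proof. by rewrite HrE inE => /andP [/subsetP sub _] /sub. Qed.

Lemma card_Hr_containing r m (S : {set E}) : S \subset rsets r ->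
  #|[set H in Hr n r m | S \subset H]| <= supsets 'C(n, r) m #|S|.
Proof.
move=> Sr; rewrite -card_rsets; apply: leq_trans (card_supsets m Sr).
by apply: subset_leq_card; apply/subsetP => H; rewrite HrE !inE -andbA.
Qed.

Lemma card_rsets_containing r (S : E) :
  #|[set f : E | (#|f| == r) && (S \subset f)]| <= 'C(n - #|S|, r - #|S|).
Proof.
have := card_supsets r (subsetT S); rewrite cardsT card_ord => bound.
apply: leq_trans (leq_trans bound (supsets_le_bin _ _ _)).
by apply: subset_leq_card; apply/subsetP => f; rewrite !inE subsetT.
Qed.

(* r-sets meeting a fixed r-set e in at least t vertices: choose t vertices
   of e, then complete them to an r-set. *)
Lemma card_meet r t e : e \in rsets r ->
  #|[set f : E | (#|f| == r) && (t <= #|e :&: f|)]| <= 'C(r, t) * 'C(n - t, r - t).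
Proof.
rewrite inE => /eqP ce.
set J := [set S : E | S \subset e & #|S| == t].
apply: (@leq_trans (\sum_(S in J) #|[set f : E | (#|f| == r) && (S \subset f)]|)).
  apply: union_bound => f; rewrite inE => /andP [cf tf].
  have [S Ssub cS] := pick_subset tf; exists S.
    by rewrite inE cS eqxx andbT (subset_trans Ssub) ?subsetIl.
  by rewrite inE cf (subset_trans Ssub) ?subsetIr.
rewrite -ce -(cards_draws e t) -sum_nat_const; apply: leq_sum => S.
by rewrite inE => /andP [_ /eqP <-]; apply: card_rsets_containing.
Qed.

End Edges.

Section Clusters.
Variables (n : nat) (H : hgraph n).

(* The components of G_H: linkedness is symmetric, so connect (linked H)
   is an equivalence and components containing a common edge coincide. *)
Lemma linked_sym : symmetric (linked H).
Proof.
by move=> e f; rewrite /linked eq_sym setIC; case: (e \in H); case: (f \in H).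
Qed.

Lemma comp_self e : e \in Defs.comp H e.
Proof. by rewrite inE connect0. Qed.

Lemma comp_eq e x : x \in Defs.comp H e -> Defs.comp H x = Defs.comp H e.
Proof.
rewrite inE => ex; apply/setP => y; rewrite !inE.
by rewrite (same_connect (sym_connect_sym linked_sym) ex).
Qed.

Lemma comp_neighbor e : 1 < #|Defs.comp H e| -> exists f, linked H e f.
Proof.
move=> c2; have : 0 < #|Defs.comp H e :\ e| by rewrite (cardsD1 e) comp_self in c2.
case/card_gt0P => f; rewrite !inE => /andP [fe /connectP [[|z p] /= pth fl]].
  by rewrite fl eqxx in fe.
by case/andP: pth => ez _; exists z.
Qed.

Definition no_linked_path := forall e f g, linked H e f -> linked H f g -> e = g.

Lemma cluster_pair C : no_linked_path -> C \in clusters H ->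
  exists e g, linked H e g /\ C = [set e; g].
Proof.
move=> nop /imsetP [e]; rewrite inE => /andP [eH c2] ->.
have [g leg] := comp_neighbor c2; exists e, g; split => //.
have sub : Defs.comp H e \subset [set e; g].
  apply/subsetP => x; rewrite inE.
  apply: (@connect_invariant _ _ (mem [set e; g])); last by rewrite !inE eqxx.
  move=> u v; rewrite !inE => /orP [] /eqP -> luv.
    by rewrite -(nop v e g _ leg) ?eqxx ?orbT // linked_sym.
  by rewrite (nop e g v leg luv) eqxx.
apply/eqP; rewrite eqEcard sub cards2.
by case/and4P: leg => _ _ -> _.
Qed.

Lemma clusters_share C D x : C \in clusters H -> D \in clusters H ->
  x \in C -> x \in D -> C = D.
Proof.
by move=> /imsetP [e _ ->] /imsetP [f _ ->] /comp_eq <- /comp_eq <-.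
Qed.

Lemma cluster_sub C : C \in clusters H -> C \subset H.
Proof.
case/imsetP => e; rewrite inE => /andP [eH _] ->; apply/subsetP => x; rewrite inE.
by apply: (@connect_invariant _ _ (mem H)) => // u v _ /and4P [].
Qed.

End Clusters.

Section Configurations.
Variables n r k : nat.
Local Notation E := {set 'I_n}.
Local Notation rsets := (rsets n r).
Local Notation N := 'C(n, r).

Definition is_config (j : nat) (S : {set E}) : bool :=
  (S \subset rsets) && (#|S| == j).

Lemma card_Hr_containing_some (I : finType) (J : {set I}) (edges : I -> {set E}) m j :
  {in J, forall i, is_config j (edges i)} ->
  #|[set H in Hr n r m | [exists i in J, edges i \subset H]]| <= #|J| * supsets N m j.
Proof.
move=> conf.
apply: (@leq_trans (\sum_(i in J) #|[set H in Hr n r m | edges i \subset H]|)).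
  apply: union_bound => H; rewrite inE => /andP [HH /existsP [i /andP [iJ sH]]].
  by exists i => //; rewrite inE HH.
rewrite -sum_nat_const; apply: leq_sum => i /conf /andP [sr /eqP <-].
exact: card_Hr_containing.
Qed.

(* Upper bound for the number of r-sets meeting a fixed r-set in at least
   t vertices (used for t = 1, 2, 3). *)
Definition meet t := 'C(r, t) * 'C(n - t, r - t).

Lemma card_meet_at_least (P : pred E) t e : e \in rsets ->
  (forall f, P f -> (#|f| == r) && (t <= #|e :&: f|)) -> #|[set f | P f]| <= meet t.
Proof.
move=> er sub; apply: leq_trans (card_meet t er).
by apply: subset_leq_card; apply/subsetP => f; rewrite !inE => /sub.
Qed.

Definition linked_pairs : {set E * E} :=
  [set q | [&& q.1 \in rsets, q.2 \in rsets, q.1 != q.2 & #|q.1 :&: q.2| == 2]].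

(* Each family below is counted edge by edge: N choices for the first edge
   and at most meet t choices for each edge meeting a previous one. *)
Lemma card_rsets_pred : #|[set x | x \in rsets]| = N.
Proof. by rewrite -(card_rsets n r); apply: eq_card => x; rewrite inE. Qed.

Lemma card_linked_pairs : #|linked_pairs| <= N * meet 2.
Proof.
rewrite -card_rsets_pred; apply: (pair_count (P := fun x => x \in rsets)
  (R := fun e f => [&& f \in rsets, e != f & #|e :&: f| == 2])) => e er.
by apply: (card_meet_at_least er) => f /and3P [/[!inE] -> _ /eqP ->].
Qed.

Definition heavy_pairs : {set E * E} :=
  [set q | [&& q.1 \in rsets, q.2 \in rsets, q.1 != q.2 & 3 <= #|q.1 :&: q.2|]].

Definition pair_edges (q : E * E) : {set E} := [set q.1; q.2].

Lemma card_heavy_pairs : #|heavy_pairs| <= N * meet 3.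
Proof.
rewrite -card_rsets_pred; apply: (pair_count (P := fun x => x \in rsets)
  (R := fun e f => [&& f \in rsets, e != f & 3 <= #|e :&: f|])) => e er.
by apply: (card_meet_at_least er) => f /and3P [/[!inE] -> _ ->].
Qed.

Lemma heavy_pairs_config : {in heavy_pairs, forall q, is_config 2 (pair_edges q)}.
Proof.
move=> q /[!inE] /and4P [q1 q2 ne _].
by rewrite /is_config cards2 ne !subUset !sub1set !inE q1 q2.
Qed.

Definition linked_paths : {set (E * E) * E} :=
  [set p | [&& p.1 \in linked_pairs, p.2 \in rsets, p.2 != p.1.1, p.2 != p.1.2
                & #|p.1.2 :&: p.2| == 2]].

Definition path_edges (p : (E * E) * E) : {set E} := [set p.1.1; p.1.2; p.2].

Lemma card_linked_paths : #|linked_paths| <= N * meet 2 * meet 2.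
Proof.
apply: (@leq_trans (#|[set x | x \in linked_pairs]| * meet 2)).
  apply: (pair_count (P := fun x => x \in linked_pairs) (R := fun q g =>
    [&& g \in rsets, g != q.1, g != q.2 & #|q.2 :&: g| == 2])) => q.
  rewrite inE => /and4P [_ q2 _ _].
  by apply: (card_meet_at_least q2) => f /and4P [/[!inE] -> _ _ /eqP ->].
rewrite leq_mul2r; apply/orP; right; apply: leq_trans card_linked_pairs.
by apply: eq_leq; apply: eq_card => x; rewrite inE.
Qed.

Lemma linked_paths_config : {in linked_paths, forall p, is_config 3 (path_edges p)}.
Proof.
move=> p /[!inE] /andP [/and4P [q1 q2 ne _] /and4P [g ge gf _]].
by rewrite /is_config !subUset !sub1set !inE q1 q2 g card_set3 // eq_sym.
Qed.

Definition touching_pairs : {set (E * E) * (E * E)} :=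
  [set p | [&& p.1 \in linked_pairs, p.2 \in linked_pairs, p.2.1 != p.1.1,
                p.2.1 != p.1.2, p.2.2 != p.1.1, p.2.2 != p.1.2
                & ~~ [disjoint p.1.1 & p.2.1]]].

Definition quad_edges (p : (E * E) * (E * E)) : {set E} :=
  [set p.1.1; p.1.2; p.2.1; p.2.2].

(* The second pair starts at an r-set meeting the first edge, then continues
   along a linked pair. *)
Lemma card_touching_pairs : #|touching_pairs| <= N * meet 2 * (meet 1 * meet 2).
Proof.
apply: (@leq_trans (#|[set x | x \in linked_pairs]| * (meet 1 * meet 2))); last first.
  rewrite leq_mul2r; apply/orP; right; apply: leq_trans card_linked_pairs.
  by apply: eq_leq; apply: eq_card => x; rewrite inE.
apply: (pair_count (P := fun x => x \in linked_pairs) (R := fun q q' =>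
  [&& q' \in linked_pairs, q'.1 != q.1, q'.1 != q.2, q'.2 != q.1,
      q'.2 != q.2 & ~~ [disjoint q.1 & q'.1]])) => q.
rewrite inE => /and4P [q1 _ _ _].
set meeting := [set f : E | (#|f| == r) && (1 <= #|q.1 :&: f|)].
apply: (@leq_trans #|[set q' : E * E | (q'.1 \in meeting) &&
     [&& q'.2 \in rsets, q'.1 != q'.2 & #|q'.1 :&: q'.2| == 2]]|).
  apply: subset_leq_card; apply/subsetP => q'; rewrite !inE.
  case/and3P => /and4P [/eqP -> -> -> ->] _ /and4P [_ _ _ touch].
  by rewrite eqxx /= card_gt0 setI_eq0 touch.
apply: (@leq_trans (#|[set x | x \in meeting]| * meet 2)).
  apply: (pair_count (P := fun x => x \in meeting)
    (R := fun f g => [&& g \in rsets, f != g & #|f :&: g| == 2])) => f.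
  rewrite inE => /andP [cf _].
  have fr : f \in rsets by rewrite inE cf.
  by apply: (card_meet_at_least fr) => g /and3P [/[!inE] -> _ /eqP ->].
rewrite leq_mul2r; apply/orP; right.
by apply: (card_meet_at_least q1) => f; rewrite inE.
Qed.

Lemma touching_pairs_config : {in touching_pairs, forall p, is_config 4 (quad_edges p)}.
Proof.
move=> p /[!inE] /andP [/and4P [a b c _] /and5P [/and4P [a' b' c' _] d e f /andP [g _]]].
by rewrite /is_config !subUset !sub1set !inE a b a' b' card_set4 // eq_sym.
Qed.

Definition linked_twosets : {set {set E}} := [set pair_edges q | q in linked_pairs].

Lemma linked_twosets_config C : C \in linked_twosets -> is_config 2 C.
Proof.
case/imsetP => q /[!inE] /and4P [a b c _] ->.
by rewrite /is_config cards2 c !subUset !sub1set !inE a b.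
Qed.

Definition cluster_families : {set {set {set E}}} :=
  [set Cl : {set {set E}} | [&& Cl \subset linked_twosets, #|Cl| == k.+1 & trivIset Cl]].

Lemma card_cluster_families : #|cluster_families| <= 'C(N * meet 2, k.+1).
Proof.
apply: (@leq_trans #|[set Cl : {set {set E}} | Cl \subset linked_twosets & #|Cl| == k.+1]|).
  by apply: subset_leq_card; apply/subsetP => Cl /[!inE] /and3P [-> -> _].
rewrite cards_draws; apply: leq_bin2l; apply: leq_trans card_linked_pairs.
exact: leq_imset_card.
Qed.

Lemma cluster_families_config :
  {in cluster_families, forall Cl, is_config (k.+1 * 2) (cover Cl)}.
Proof.
move=> Cl /[!inE] /and3P [sub /eqP cCl triv].
have conf C : C \in Cl -> is_config 2 C by move/(subsetP sub)/linked_twosets_config.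
apply/andP; split.
  apply/subsetP => x /bigcupP [C /conf /andP [/subsetP Cr _]]; exact: Cr.
rewrite -(eqP triv) -cCl -sum_nat_const; apply/eqP/eq_bigr => C /conf.
by case/andP => _ /eqP.
Qed.

Definition edges_through (v : 'I_n) : {set E} := [set f : E | (#|f| == r) && ([set v] \subset f)].

Definition stars : {set 'I_n * {set E}} :=
  [set p : 'I_n * {set E} | (p.2 \subset edges_through p.1) && (#|p.2| == k.+1)].

Definition star_edges (p : 'I_n * {set E}) : {set E} := p.2.

Lemma card_stars : #|stars| <= n * 'C('C(n - 1, r - 1), k.+1).
Proof.
apply: (@leq_trans (#|[set x : 'I_n | true]| * 'C('C(n - 1, r - 1), k.+1))).
  apply: (pair_count (P := fun _ => true)
    (R := fun v (S : {set E}) => (S \subset edges_through v) && (#|S| == k.+1))) => v _.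
  rewrite cards_draws; apply: leq_bin2l.
  by have := card_rsets_containing r [set v]; rewrite cards1.
by rewrite -[X in X <= _]/(#|[set: 'I_n]| * _) cardsT card_ord.
Qed.

Lemma stars_config : {in stars, forall p, is_config k.+1 (star_edges p)}.
Proof.
move=> p; rewrite inE => /andP [sub cp]; rewrite /is_config cp andbT.
by apply: subset_trans sub _; apply/subsetP => f /[!inE] /andP [-> _].
Qed.

End Configurations.

Lemma no_witness (I : finType) (J : {set I}) (P : pred I) i :
  ~~ [exists i in J, P i] -> i \in J -> P i -> False.
Proof. by move=> none iJ Pi; move/negP: none; apply; apply/existsP; exists i; rewrite iJ. Qed.

Section AvoidingConfigurations.
Variables (n r m k : nat) (H : hgraph n).
Hypothesis HH : H \in Hr n r m.
Hypothesis no_heavy : ~~ [exists q in heavy_pairs n r, pair_edges q \subset H].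
Hypothesis no_path : ~~ [exists p in linked_paths n r, path_edges p \subset H].
Hypothesis no_touch : ~~ [exists p in touching_pairs n r, quad_edges p \subset H].
Hypothesis no_family : ~~ [exists Cl in cluster_families n r k, cover Cl \subset H].
Hypothesis no_star : ~~ [exists p in stars n r k, star_edges p \subset H].

Lemma linkedP e f : linked H e f -> [/\ e \in H, f \in H, e != f & #|e :&: f| = 2].
Proof. by case/and4P => eH fH ef /eqP. Qed.

Lemma linked_pair_mem e f : linked H e f -> (e, f) \in linked_pairs n r.
Proof.
case/linkedP => eH fH ef ef2.
by rewrite inE /= (Hr_edge HH eH) (Hr_edge HH fH) ef ef2 eqxx.
Qed.

Lemma small_intersections e f : e \in H -> f \in H -> e != f -> #|e :&: f| <= 2.
Proof.
move=> eH fH ef; rewrite leqNgt; apply/negP => big.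
apply: (no_witness no_heavy (i := (e, f))); last by rewrite /pair_edges /= subUset !sub1set eH fH.
by rewrite inE /= (Hr_edge HH eH) (Hr_edge HH fH) ef big.
Qed.

Lemma no_path_H : no_linked_path H.
Proof.
move=> e f g lef lfg; apply/eqP/negPn/negP => eg.
apply: (no_witness no_path (i := ((e, f), g))).
  have [_ gH fg fg2] := linkedP lfg.
  by rewrite inE /= (linked_pair_mem lef) (Hr_edge HH gH) fg2 (eq_sym g e) eg (eq_sym g f) fg.
rewrite /path_edges /= !subUset !sub1set.
by case/linkedP: lef => -> -> _ _; case/linkedP: lfg => _ -> _ _.
Qed.

Lemma clusters_have_two_edges C : C \in clusters H -> #|C| = 2.
Proof.
case/(cluster_pair no_path_H) => e [g [leg ->]].
by rewrite cards2; case/linkedP: leg => _ _ -> _.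
Qed.

Lemma cluster_partner C a : C \in clusters H -> a \in C ->
  exists2 a', linked H a a' & a' \in C.
Proof.
case/(cluster_pair no_path_H) => e [g [leg ->]] /set2P [] ->.
  by exists g; rewrite // !inE eqxx orbT.
by exists e; rewrite 1?linked_sym // !inE eqxx.
Qed.

(* Condition (c): if two distinct clusters shared a vertex v, their linked
   pairs through v would form a touching configuration. *)
Lemma clusters_vertex_disjoint C D : C \in clusters H -> D \in clusters H ->
  C != D -> [disjoint vset C & vset D].
Proof.
move=> cC cD CD; rewrite -setI_eq0; apply/eqP/setP => v; rewrite !inE.
apply/negbTE/negP => /andP [/bigcupP [a aC va] /bigcupP [b bD vb]].
have [a' laa' a'C] := cluster_partner cC aC.
have [b' lbb' b'D] := cluster_partner cD bD.
have apart x y : x \in C -> y \in D -> y != x.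
  by move=> xC yD; apply: contraNneq CD => eyx; rewrite (clusters_share cC cD xC) -?eyx.
apply: (no_witness no_touch (i := ((a, a'), (b, b')))).
  rewrite inE /= (linked_pair_mem laa') (linked_pair_mem lbb') !apart //=.
  by rewrite -setI_eq0; apply/set0Pn; exists v; rewrite inE va vb.
rewrite /quad_edges /= !subUset !sub1set.
by case/linkedP: laa' => -> -> _ _; case/linkedP: lbb' => -> -> _ _.
Qed.

(* Condition (d): k+1 clusters would be k+1 disjoint linked 2-sets. *)
Lemma few_clusters : #|clusters H| <= k.
Proof.
rewrite leqNgt; apply/negP => many; have [Cl sCl cCl] := pick_subset many.
have cl C : C \in Cl -> C \in clusters H by move/(subsetP sCl).
apply: (no_witness no_family (i := Cl)); last first.
  apply/subsetP => x /bigcupP [C /cl cC xC]; exact: subsetP (cluster_sub cC) x xC.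
rewrite inE cCl eqxx /=; apply/andP; split.
  apply/subsetP => C /cl cC; have [e [g [leg ->]]] := cluster_pair no_path_H cC.
  by apply/imsetP; exists (e, g); rewrite ?(linked_pair_mem leg).
apply/trivIsetP => A B /cl cA /cl cB AB; rewrite -setI_eq0; apply/eqP/setP => x.
rewrite !inE; apply/negbTE/negP => /andP [xA xB].
by move/eqP: AB; apply; apply: clusters_share cA cB xA xB.
Qed.

Lemma small_degrees v : degree H v <= k.
Proof.
rewrite leqNgt; apply/negP => big; have [S sS cS] := pick_subset big.
apply: (no_witness no_star (i := (v, S))); last first.
  by apply: subset_trans sS _; apply/subsetP => e /[!inE] /andP [].
rewrite inE /= cS eqxx andbT; apply/subsetP => e /(subsetP sS).
rewrite !inE => /andP [eH ve]; rewrite sub1set ve andbT.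
by have := Hr_edge HH eH; rewrite inE.
Qed.

Lemma avoiding_good : good k k H.
Proof.
apply/and5P; split; last by apply/forallP => v; apply: small_degrees.
- apply/forallP => e; apply/implyP => eH; apply/forallP => f; apply/implyP => fH.
  by apply/implyP; apply: small_intersections.
- by apply/forallP => C; apply/implyP => /clusters_have_two_edges ->.
- apply/forallP => C; apply/implyP => cC; apply/forallP => D; apply/implyP => cD.
  by apply/implyP; apply: clusters_vertex_disjoint.
- exact: few_clusters.
Qed.

End AvoidingConfigurations.

Section BadHypergraphs.
Variables n r m k : nat.
Local Notation N := 'C(n, r).

Definition bad : {set hgraph n} := [set H in Hr n r m | ~~ good k k H].

Lemma bad_contains_config H : H \in bad ->
  [|| [exists q in heavy_pairs n r, pair_edges q \subset H],
      [exists p in linked_paths n r, path_edges p \subset H],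
      [exists p in touching_pairs n r, quad_edges p \subset H],
      [exists Cl in cluster_families n r k, cover Cl \subset H]
    | [exists p in stars n r k, star_edges p \subset H]].
Proof.
rewrite inE => /andP [HH]; apply: contraNT; rewrite !negb_or => /and5P [nA nP nQ nD nE].
exact: avoiding_good HH nA nP nQ nD nE.
Qed.

Lemma card_bad :
  #|bad| <= #|heavy_pairs n r| * supsets N m 2 + #|linked_paths n r| * supsets N m 3
            + #|touching_pairs n r| * supsets N m 4
            + #|cluster_families n r k| * supsets N m (k.+1 * 2)
            + #|stars n r k| * supsets N m k.+1.
Proof.
set S1 := [set H in Hr n r m | [exists q in heavy_pairs n r, pair_edges q \subset H]].
set S2 := [set H in Hr n r m | [exists p in linked_paths n r, path_edges p \subset H]].
set S3 := [set H in Hr n r m | [exists p in touching_pairs n r, quad_edges p \subset H]].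
set S4 := [set H in Hr n r m | [exists Cl in cluster_families n r k, cover Cl \subset H]].
set S5 := [set H in Hr n r m | [exists p in stars n r k, star_edges p \subset H]].
have cardU (A B : {set hgraph n}) : #|A :|: B| <= #|A| + #|B| by rewrite cardsU leq_subr.
apply: (@leq_trans #|S1 :|: S2 :|: S3 :|: S4 :|: S5|).
  apply: subset_leq_card; apply/subsetP => H Hbad.
  have HH : H \in Hr n r m by move: Hbad; rewrite inE => /andP [].
  rewrite !in_setU [H \in S1]inE [H \in S2]inE [H \in S3]inE [H \in S4]inE [H \in S5]inE.
  by rewrite HH /= -!orbA; apply: bad_contains_config.
apply: leq_trans (cardU _ _) _; apply: leq_add;
  last by apply: card_Hr_containing_some; apply: stars_config.
apply: leq_trans (cardU _ _) _; apply: leq_add;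
  last by apply: card_Hr_containing_some; apply: cluster_families_config.
apply: leq_trans (cardU _ _) _; apply: leq_add;
  last by apply: card_Hr_containing_some; apply: touching_pairs_config.
apply: leq_trans (cardU _ _) _; apply: leq_add;
  last by apply: card_Hr_containing_some; apply: linked_paths_config.
by apply: card_Hr_containing_some; apply: heavy_pairs_config.
Qed.

End BadHypergraphs.

Lemma factorialE j : j`! = Factorial.fact j.
Proof. by elim: j => [|j IH] //; rewrite factS IH /= mulnE. Qed.

Lemma bin_fact_le a j : 'C(a, j) * j`! <= a ^ j.
Proof.
rewrite bin_ffact; elim: j a => [|j IH] a; first by rewrite ffactn0 expn0.
rewrite ffactnS expnS leq_mul2l; apply/orP; right.
by apply: leq_trans (IH _) _; apply: leq_expn_base; apply: leq_pred.
Qed.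

Lemma bin_le_pow a j : 'C(a, j) <= a ^ j.
Proof. by apply: leq_trans (bin_fact_le a j); rewrite leq_pmulr ?fact_gt0. Qed.

(* C(n - t, r - t) / C(n, r) <= (r / n)^t: the supsets bound with (N,m) := (n,r). *)
Lemma bin_ratio n r t : t <= r -> r <= n -> 'C(n - t, r - t) * n ^ t <= 'C(n, r) * r ^ t.
Proof. by move=> tr rn; have := supsets_bound t n r; rewrite /supsets tr rn. Qed.

Lemma bin_diag n r : 1 <= r -> 'C(n - 1, r - 1) * n = 'C(n, r) * r.
Proof. by case: r => [|r] // _; rewrite !subn1 /= mulnC mul_bin_diag mulnC. Qed.

Lemma bin_lower_bound n r : 2 <= r -> r <= n -> n * (n - 1) <= 'C(n, r) * r ^ 2.
Proof.
move=> r2 rn; have h1 := bin_diag n (ltnW r2).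
have r1 : 1 <= r - 1 by lia.
have h2 := bin_diag (n - 1) r1.
have pos : 0 < 'C(n - 1 - 1, r - 1 - 1) by rewrite bin_gt0; lia.
have e : n * (n - 1) * 'C(n - 1 - 1, r - 1 - 1) = 'C(n, r) * (r * (r - 1)).
  by rewrite mulnA -h1 mulnAC -mulnA h2; lia.
apply: (@leq_trans ('C(n, r) * (r * (r - 1)))); first by rewrite -e leq_pmulr.
by rewrite leq_mul2l expnS expn1 leq_mul2l leq_subr !orbT.
Qed.

Local Open Scope R_scope.

Lemma leq_INR a b : (a <= b)%N -> INR a <= INR b.
Proof. by move/leP; apply: le_INR. Qed.

Lemma INR_muln a b : INR (a * b)%N = INR a * INR b.
Proof. by rewrite mulnE mult_INR. Qed.

Lemma INR_expn a b : INR (a ^ b)%N = INR a ^ b.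
Proof. by elim: b => [|b IH]; rewrite ?expn0 // expnS INR_muln IH. Qed.

Lemma supsets_real N m j : (0 < N)%N ->
  INR (supsets N m j) <= INR 'C(N, m) * (INR m / INR N) ^ j.
Proof.
move=> N0; have := leq_INR (supsets_bound j N m); rewrite !INR_muln !INR_expn => h.
have hN : 0 < INR N by apply: lt_0_INR; apply/ltP.
apply: (Rmult_le_reg_r (INR N ^ j)); first exact: pow_lt.
rewrite Rmult_assoc -Rpow_mult_distr.
by have -> : INR m / INR N * INR N = INR m by field; lra.
Qed.

Lemma bin_real a j : INR 'C(a, j) * INR (Factorial.fact j) <= INR a ^ j.
Proof. by rewrite -factorialE -INR_muln -INR_expn; apply: leq_INR; apply: bin_fact_le. Qed.

(* The expected number of copies of each configuration in a uniform
   H_r(n,m), expressed through the edge density u = m / C(n,r). *)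
Section Translation.
Variables n r m k : nat.
Hypotheses (r3 : (3 <= r)%N) (rn : (r <= n)%N).

Let Nn := INR n.
Let Rr := INR r.
Let M := INR m.
Let NN := INR 'C(n, r).
Let u := M / NN.
Let F := INR (Factorial.fact k.+1).
Let tau := Rr ^ 6 * M ^ 2 / Nn ^ 3.
Let y := M * Rr ^ 2 / Nn.
Let w := Rr * M / Nn.
Let A := Rr ^ 4 * M / Nn ^ 2.

Lemma NN_pos : 0 < NN.
Proof. by apply: lt_0_INR; apply/ltP; rewrite bin_gt0. Qed.

Lemma Nn_pos : 0 < Nn.
Proof. by apply: lt_0_INR; apply/ltP; lia. Qed.

Lemma u_ge0 : 0 <= u.
Proof. by apply: Rdiv_nonneg; [apply: pos_INR | apply: NN_pos]. Qed.

Lemma F_pos : 0 < F.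
Proof. by apply: lt_0_INR; apply: Factorial.lt_O_fact. Qed.

Lemma mass_u : NN * u = M.
Proof. by rewrite /u; field; apply: Rgt_not_eq; apply: NN_pos. Qed.

(* A fixed r-set meets about r^(2t) / n^t r-sets in t vertices, so the
   expected number of edges meeting it in t vertices is r^(2t) m / n^t. *)
Lemma meet_u t : (t <= r)%N -> INR (meet n r t) * u <= Rr ^ t * Rr ^ t * M / Nn ^ t.
Proof.
move=> tr; have hN := NN_pos; have hn := Nn_pos; have hnt : 0 < Nn ^ t by apply: pow_lt.
have ratio := leq_INR (bin_ratio tr rn); rewrite !INR_muln !INR_expn in ratio.
have binr : INR 'C(r, t) <= Rr ^ t by rewrite /Rr -INR_expn; apply: leq_INR; apply: bin_le_pow.
rewrite /meet INR_muln.
apply: (Rmult_le_reg_r (Nn ^ t * NN)); first exact: Rmult_lt_0_compat.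
have -> : Rr ^ t * Rr ^ t * M / Nn ^ t * (Nn ^ t * NN) = Rr ^ t * (NN * Rr ^ t) * M.
  by field; apply: Rgt_not_eq.
have -> : INR 'C(r, t) * INR 'C(n - t, r - t) * u * (Nn ^ t * NN) =
          INR 'C(r, t) * (INR 'C(n - t, r - t) * Nn ^ t) * M.
  by rewrite -mass_u; ring.
apply: Rmult_le_compat_r; first exact: pos_INR.
apply: Rmult_le_compat => //; first exact: pos_INR.
by apply: Rmult_le_pos; [apply: pos_INR | apply: Rlt_le].
Qed.

Lemma star_u : INR 'C(n - 1, r - 1) * u = w.
Proof.
have diag : INR 'C(n - 1, r - 1) * Nn = NN * Rr by rewrite -!INR_muln bin_diag //; lia.
have nN := Rgt_not_eq _ _ NN_pos; have nn := Rgt_not_eq _ _ Nn_pos.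
apply: (Rmult_eq_reg_r Nn) => //.
have -> : INR 'C(n - 1, r - 1) * u * Nn = INR 'C(n - 1, r - 1) * Nn * M / NN.
  by rewrite /u; field.
by rewrite diag /w; field.
Qed.

Lemma meet2_u : 0 <= INR (meet n r 2) * u <= A.
Proof.
split; first by apply: Rmult_le_pos; [apply: pos_INR | apply: u_ge0].
have -> : A = Rr ^ 2 * Rr ^ 2 * M / Nn ^ 2 by rewrite /A; field; apply: Rgt_not_eq Nn_pos.
by apply: meet_u; lia.
Qed.

Lemma heavy_term : INR #|heavy_pairs n r| * u ^ 2 <= tau.
Proof.
have hc : INR #|heavy_pairs n r| <= NN * INR (meet n r 3).
  by rewrite -INR_muln; apply: leq_INR; apply: card_heavy_pairs.
have hm := meet_u r3; have hM := pos_INR m; have hu := u_ge0.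
apply: (Rle_trans _ (NN * INR (meet n r 3) * u ^ 2)).
  by apply: Rmult_le_compat_r => //; apply: pow_le.
have -> : NN * INR (meet n r 3) * u ^ 2 = (NN * u) * (INR (meet n r 3) * u) by ring.
have -> : tau = M * (Rr ^ 3 * Rr ^ 3 * M / Nn ^ 3).
  by rewrite /tau; field; apply: Rgt_not_eq Nn_pos.
by rewrite mass_u; apply: Rmult_le_compat_l.
Qed.

Lemma path_term : INR #|linked_paths n r| * u ^ 3 <= tau * y.
Proof.
have hc : INR #|linked_paths n r| <= NN * INR (meet n r 2) * INR (meet n r 2).
  by rewrite -!INR_muln; apply: leq_INR; apply: card_linked_paths.
have [a0 aA] := meet2_u; have hM := pos_INR m; have hu := u_ge0.
apply: (Rle_trans _ (NN * INR (meet n r 2) * INR (meet n r 2) * u ^ 3)).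
  by apply: Rmult_le_compat_r => //; apply: pow_le.
have -> : NN * INR (meet n r 2) * INR (meet n r 2) * u ^ 3 =
          (NN * u) * (INR (meet n r 2) * u) * (INR (meet n r 2) * u) by ring.
have -> : tau * y = M * A * A by rewrite /tau /y /A; field; apply: Rgt_not_eq Nn_pos.
rewrite mass_u; apply: Rmult_le_compat => //; first by apply: Rmult_le_pos.
exact: Rmult_le_compat_l.
Qed.

Lemma touch_term : INR #|touching_pairs n r| * u ^ 4 <= tau * y ^ 2.
Proof.
have hc : INR #|touching_pairs n r| <=
          NN * INR (meet n r 2) * (INR (meet n r 1) * INR (meet n r 2)).
  by rewrite -!INR_muln; apply: leq_INR; apply: card_touching_pairs.
have [a0 aA] := meet2_u; have hM := pos_INR m; have hu := u_ge0.
have b0 : 0 <= INR (meet n r 1) * u by apply: Rmult_le_pos => //; apply: pos_INR.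
have by' : INR (meet n r 1) * u <= y.
  have -> : y = Rr ^ 1 * Rr ^ 1 * M / Nn ^ 1 by rewrite /y; field; apply: Rgt_not_eq Nn_pos.
  by apply: meet_u; lia.
set a := INR (meet n r 2) * u in a0 aA; set b := INR (meet n r 1) * u in b0 by'.
apply: (Rle_trans _ (NN * INR (meet n r 2) * (INR (meet n r 1) * INR (meet n r 2)) * u ^ 4)).
  by apply: Rmult_le_compat_r => //; apply: pow_le.
have -> : NN * INR (meet n r 2) * (INR (meet n r 1) * INR (meet n r 2)) * u ^ 4 =
          (NN * u) * a * (b * a) by rewrite /a /b; ring.
have -> : tau * y ^ 2 = M * A * (y * A) by rewrite /tau /y /A; field; apply: Rgt_not_eq Nn_pos.
rewrite mass_u; apply: Rmult_le_compat => //; try by apply: Rmult_le_pos.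
  exact: Rmult_le_compat_l.
by apply: Rmult_le_compat.
Qed.

Lemma family_term :
  INR #|cluster_families n r k| * u ^ (k.+1 * 2) <= (y ^ 2) ^ k.+1 / F.
Proof.
have hc := leq_INR (card_cluster_families n r k).
have hb := bin_real ('C(n, r) * meet n r 2) k.+1; rewrite INR_muln -/NN -/F in hb.
have [a0 aA] := meet2_u; have hM := pos_INR m; have hu := u_ge0; have hF := F_pos.
apply: (Rmult_le_reg_r F) => //.
have -> : (y ^ 2) ^ k.+1 / F * F = (M * A) ^ k.+1.
  have -> : y ^ 2 = M * A by rewrite /y /A; field; apply: Rgt_not_eq Nn_pos.
  by field; apply: Rgt_not_eq.
apply: (Rle_trans _ ((NN * INR (meet n r 2)) ^ k.+1 * u ^ (k.+1 * 2))).
  have -> : INR #|cluster_families n r k| * u ^ (k.+1 * 2) * F =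
            INR #|cluster_families n r k| * F * u ^ (k.+1 * 2) by ring.
  apply: Rmult_le_compat_r; first exact: pow_le.
  by apply: Rle_trans hb; apply: Rmult_le_compat_r => //; apply: Rlt_le.
rewrite mulnC pow_mult -Rpow_mult_distr; apply: pow_incr; split.
  have hNN := NN_pos; have hm2 := pos_INR (meet n r 2).
  by apply: Rmult_le_pos; [apply: Rmult_le_pos; [apply: Rlt_le | ] | apply: pow_le].
have -> : NN * INR (meet n r 2) * u ^ 2 = (NN * u) * (INR (meet n r 2) * u) by ring.
by rewrite mass_u; apply: Rmult_le_compat_l.
Qed.

Lemma star_term : INR #|stars n r k| * u ^ k.+1 <= Nn * w ^ k.+1 / F.
Proof.
have hc := leq_INR (card_stars n r k); rewrite INR_muln -/Nn in hc.
have hb := bin_real 'C(n - 1, r - 1) k.+1; rewrite -/F in hb.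
have hu := u_ge0; have hF := F_pos; have hn := Nn_pos.
apply: (Rmult_le_reg_r F) => //.
have -> : Nn * w ^ k.+1 / F * F = Nn * (INR 'C(n - 1, r - 1) * u) ^ k.+1.
  by rewrite star_u; field; apply: Rgt_not_eq.
have -> : INR #|stars n r k| * u ^ k.+1 * F = INR #|stars n r k| * F * u ^ k.+1 by ring.
rewrite Rpow_mult_distr -Rmult_assoc; apply: Rmult_le_compat_r; first exact: pow_le.
apply: (Rle_trans _ (Nn * INR 'C('C(n - 1, r - 1), k.+1) * F)).
  by apply: Rmult_le_compat_r => //; apply: Rlt_le.
by rewrite Rmult_assoc; apply: Rmult_le_compat_l => //; apply: Rlt_le.
Qed.

Lemma card_bad_real :
  INR #|bad n r m k| <= INR #|Hr n r m| * expected_configs Nn Rr M k.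
Proof.
set T := INR #|Hr n r m|.
have hT : 0 <= T by apply: pos_INR.
have prob j : INR (supsets 'C(n, r) m j) <= T * u ^ j.
  by rewrite /T card_Hr; apply: supsets_real; rewrite bin_gt0.
have expected (c : nat) j bound : INR c * u ^ j <= bound ->
    INR c * INR (supsets 'C(n, r) m j) <= T * bound.
  move=> h; apply: (Rle_trans _ (INR c * (T * u ^ j))).
    by apply: Rmult_le_compat_l; [apply: pos_INR | apply: prob].
  have -> : INR c * (T * u ^ j) = T * (INR c * u ^ j) by ring.
  exact: Rmult_le_compat_l.
have := leq_INR (card_bad n r m k); rewrite !plus_INR !INR_muln.
have := expected _ _ _ heavy_term; have := expected _ _ _ path_term.
have := expected _ _ _ touch_term; have := expected _ _ _ family_term.
have := expected _ _ _ star_term.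
rewrite /expected_configs; cbv zeta; rewrite -/Nn -/Rr -/M -/F -/tau -/y -/w; lra.
Qed.

End Translation.

Lemma good_mono n a a' b (H : hgraph n) : (a <= a')%N -> good a b H -> good a' b H.
Proof.
move=> aa /and5P [h1 h2 h3 h4 /forallP h5]; apply/and5P; split => //.
by apply/forallP => v; apply: leq_trans (h5 v) aa.
Qed.

Section Ratios.
Variables n r m : nat.
Let k := ceil_log n r.

Lemma card_Hplusplus_bad : (card_Hplusplus n r m + #|bad n r m k|)%N = card_H n r m.
Proof.
rewrite /card_H -(cardsID [set H | good k k H] (Hr n r m)); congr addn.
  by apply: eq_card => H; rewrite !inE.
by apply: eq_card => H; rewrite !inE andbC.
Qed.

Lemma card_Hplusplus_le : (card_Hplusplus n r m <= card_Hplus n r m)%N.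
Proof.
apply: subset_leq_card; apply/subsetP => H; rewrite !inE => /andP [-> g].
by apply: good_mono g; apply: leq_addr.
Qed.

Lemma card_Hplus_le : (card_Hplus n r m <= card_H n r m)%N.
Proof. by apply: subset_leq_card; apply/subsetP => H; rewrite inE => /andP []. Qed.

End Ratios.

(* The combinatorial estimate: both ratios are within the expected number of
   forbidden configurations of 1, as soon as m <= n(n-1)/r^2 <= C(n,r). *)
Lemma relative_errors n r m : (3 <= r)%coq_nat -> (r <= n)%coq_nat ->
  INR m * INR r ^ 2 <= INR n * (INR n - 1) ->
  Rabs (INR (card_Hplus n r m) / INR (card_H n r m) - 1)
    <= expected_configs (INR n) (INR r) (INR m) (ceil_log n r) /\
  Rabs (INR (card_Hplusplus n r m) / INR (card_H n r m) - 1)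
    <= expected_configs (INR n) (INR r) (INR m) (ceil_log n r).
Proof.
move=> /leP r3 /leP rn hm; set X := expected_configs _ _ _ _.
have mN : (m <= 'C(n, r))%N.
  have low := leq_INR (bin_lower_bound (ltnW r3) rn).
  rewrite 2!INR_muln INR_expn minus_INR /= in low; last by apply/leP; lia.
  have r0 : 0 < INR r ^ 2 by apply: pow_lt; apply: lt_0_INR; apply/ltP; lia.
  apply/leP; apply: INR_le; apply: (Rmult_le_reg_r (INR r ^ 2)) => //; lra.
have hT : 0 < INR (card_H n r m).
  by rewrite /card_H card_Hr; apply: lt_0_INR; apply/ltP; rewrite bin_gt0.
have hB := @card_bad_real n r m (ceil_log n r) r3 rn.
rewrite -/X -[#|Hr n r m|]/(card_H n r m) in hB.
have hsplit := f_equal INR (card_Hplusplus_bad n r m); rewrite plus_INR in hsplit.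
have h1 := leq_INR (card_Hplusplus_le n r m); have h2 := leq_INR (card_Hplus_le n r m).
split; apply: (relative_error _ _ (INR #|bad n r m (ceil_log n r)|)) => //; lra.
Qed.

End HypergraphCounting.

Local Open Scope R_scope.

Lemma exp_le_mono x y : x <= y -> exp x <= exp y.
Proof. intros [h | h]; [left; apply exp_increasing, h | subst; lra]. Qed.

Lemma exp_INR k : exp (INR k) = exp 1 ^ k.
Proof.
induction k as [| k IH]; [simpl; apply exp_0 |].
rewrite S_INR, exp_plus, IH; simpl; ring.
Qed.

Lemma IZR_le_INR_to_nat z : IZR z <= INR (Z.to_nat z).
Proof.
destruct (Z_le_gt_dec 0 z) as [h | h].
- rewrite INR_IZR_INZ, Z2Nat.id; [lra | exact h].
- apply Rle_trans with 0; [apply IZR_le; lia | apply pos_INR].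
Qed.

Lemma ceil_log_ge n r : ln (INR n / INR r ^ 2) <= INR (ceil_log n r).
Proof.
unfold ceil_log, Rceil; eapply Rle_trans; [| apply IZR_le_INR_to_nat].
rewrite minus_IZR; destruct (archimed (- ln (INR n / INR r ^ 2))); lra.
Qed.

Lemma ceil_log_pos n r : 0 < ln (INR n / INR r ^ 2) -> (1 <= ceil_log n r)%nat.
Proof.
intro h; pose proof (ceil_log_ge n r) as hc.
destruct (ceil_log n r) as [| k]; [rewrite INR_0 in hc; lra | lia].
Qed.

Lemma ceil_log_exp n r : 0 < INR n / INR r ^ 2 -> INR n / INR r ^ 2 <= exp 1 ^ ceil_log n r.
Proof.
intro h; rewrite <- exp_INR, <- (exp_ln _ h).
apply exp_le_mono, ceil_log_ge.
Qed.

Lemma pow_le_fact z : 0 <= z -> exists C, 0 < C /\ forall j, z ^ j <= C * INR (fact j).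
Proof.
intro hz; destruct (INR_unbounded z) as [J hJ].
set (b := Rmax 1 z); assert (hb1 : 1 <= b) by apply Rmax_l; assert (hbz : z <= b) by apply Rmax_r.
assert (hbJ : 1 <= b ^ J) by (apply pow_R1_Rle; exact hb1).
assert (hf : forall j, 1 <= INR (fact j)) by (intro j; apply (le_INR 1), lt_O_fact).
exists (b ^ J); split; [lra |].
induction j as [| j IH]; [simpl; lra |].
destruct (le_lt_dec (S j) J) as [hj | hj].
- apply Rle_trans with (b ^ S j); [apply pow_incr; lra |].
  apply Rle_trans with (b ^ J); [apply Rle_pow; assumption |].
  specialize (hf (S j)); nra.
- rewrite fact_simpl, mult_INR.
  assert (hzj : z <= INR (S j)) by (apply Rle_trans with (INR J); [lra | apply le_INR; lia]).
  replace (b ^ J * (INR (S j) * INR (fact j))) with (INR (S j) * (b ^ J * INR (fact j))) by ring.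
  simpl; apply Rmult_le_compat; [exact hz | apply pow_le, hz | exact hzj | exact IH].
Qed.

Lemma INR_fact_pos j : 0 < INR (fact j).
Proof. apply lt_0_INR, lt_O_fact. Qed.

Lemma INR_fact_mono j : INR (fact j) <= INR (fact (S j)).
Proof. apply le_INR; rewrite fact_simpl; pose proof (lt_O_fact j); nia. Qed.

(* Too many clusters: since k >= log x, the term (y^2)^(k+1) / (k+1)! is
   O(y^2 / x) for bounded y. *)
Lemma cluster_tail K : 0 <= K -> exists CD, forall k x y,
  0 < x -> x <= exp 1 ^ k -> 0 <= y <= K ->
  (y ^ 2) ^ S k / INR (fact (S k)) <= CD * (y ^ 2 / x).
Proof.
intro hK; assert (he : 0 < exp 1) by apply exp_pos.
destruct (pow_le_fact (exp 1 * K ^ 2)) as [CD [hCD hD]].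
{ apply Rmult_le_pos; [lra | apply pow_le; lra]. }
exists CD; intros k x y hx hxe hy.
pose proof (INR_fact_pos (S k)) as hF; pose proof (INR_fact_mono k) as hfk.
assert (key : x * (K ^ 2) ^ k <= CD * INR (fact (S k))).
{ apply Rle_trans with (exp 1 ^ k * (K ^ 2) ^ k).
  - apply Rmult_le_compat_r; [apply pow_le, pow_le; lra | exact hxe].
  - rewrite <- Rpow_mult_distr; apply Rle_trans with (CD * INR (fact k)); [apply hD | nra]. }
assert (hyk : (y ^ 2) ^ k <= (K ^ 2) ^ k)
  by (apply pow_incr; split; [apply pow_le | apply pow_incr]; lra).
assert (hy2 : 0 <= y ^ 2) by (apply pow_le; lra).
apply (Rmult_le_reg_r (INR (fact (S k)) * x)); [apply Rmult_lt_0_compat; assumption |].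
change ((y ^ 2) ^ S k) with (y ^ 2 * (y ^ 2) ^ k).
replace (y ^ 2 * (y ^ 2) ^ k / INR (fact (S k)) * (INR (fact (S k)) * x))
  with (y ^ 2 * (x * (y ^ 2) ^ k)) by (field; lra).
replace (CD * (y ^ 2 / x) * (INR (fact (S k)) * x)) with (y ^ 2 * (CD * INR (fact (S k))))
  by (field; lra).
apply Rmult_le_compat_l; [exact hy2 |].
apply Rle_trans with (x * (K ^ 2) ^ k); [apply Rmult_le_compat_l; lra | exact key].
Qed.

Lemma star_tail K : 0 <= K -> exists CE, forall k x w rr, (1 <= k)%nat ->
  0 < x -> x <= exp 1 ^ k -> 0 <= w <= K ->
  x * rr ^ 2 * w ^ S k / INR (fact (S k)) <= CE * ((rr * w) ^ 2 / x).
Proof.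
intro hK; assert (he : 0 < exp 1) by apply exp_pos.
destruct (pow_le_fact (exp 1 ^ 2 * (K + 1))) as [CE [hCE hE]].
{ apply Rmult_le_pos; [apply pow_le | ]; lra. }
exists CE; intros k x w rr hk hx hxe hw.
destruct k as [| k]; [lia |].
pose proof (INR_fact_pos (S (S k))) as hF; pose proof (INR_fact_mono (S k)) as hfk.
assert (hwk : w ^ k <= (K + 1) ^ S k).
{ apply Rle_trans with ((K + 1) ^ k); [apply pow_incr; lra | apply Rle_pow; [lra | lia]]. }
assert (hx2 : x ^ 2 <= (exp 1 ^ 2) ^ S k).
{ rewrite <- pow_mult, Nat.mul_comm, pow_mult; apply pow_incr; lra. }
assert (key : x ^ 2 * w ^ k <= CE * INR (fact (S (S k)))).
{ apply Rle_trans with ((exp 1 ^ 2) ^ S k * (K + 1) ^ S k).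
  - apply Rmult_le_compat; [apply pow_le; lra | apply pow_le; lra | exact hx2 | exact hwk].
  - rewrite <- Rpow_mult_distr; apply Rle_trans with (CE * INR (fact (S k))); [apply hE | nra]. }
assert (hc : 0 <= (rr * w) ^ 2 / x) by (apply Rdiv_nonneg; [apply pow2_ge_0 | exact hx]).
apply (Rmult_le_reg_r (INR (fact (S (S k))))); [exact hF |].
change (w ^ S (S k)) with (w * (w * w ^ k)).
replace (x * rr ^ 2 * (w * (w * w ^ k)) / INR (fact (S (S k))) * INR (fact (S (S k))))
  with ((rr * w) ^ 2 / x * (x ^ 2 * w ^ k)) by (field; lra).
replace (CE * ((rr * w) ^ 2 / x) * INR (fact (S (S k))))
  with ((rr * w) ^ 2 / x * (CE * INR (fact (S (S k))))) by ring.
apply Rmult_le_compat_l; [exact hc | exact key].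
Qed.

Lemma expected_configs_small K : 0 <= K -> exists C, forall n r m : nat,
  3 <= INR r -> 4 * INR r ^ 2 <= INR n -> INR m <= K * (INR n / INR r ^ 2) ->
  expected_configs (INR n) (INR r) (INR m) (ceil_log n r)
    <= C * (INR r ^ 6 * INR m ^ 2 / INR n ^ 3).
Proof.
intros hK; destruct (cluster_tail K hK) as [CD hD]; destruct (star_tail K hK) as [CE hE].
exists (1 + K + K ^ 2 + CD + CE); intros n r m hr hn hm.
assert (hr2 : 0 < INR r ^ 2) by (apply pow_lt; lra).
assert (hn0 : 0 < INR n) by lra.
pose proof (pos_INR m) as hm0.
unfold expected_configs; cbv zeta.
set (k := ceil_log n r); set (F := INR (fact (S k))).
set (tau := INR r ^ 6 * INR m ^ 2 / INR n ^ 3); set (y := INR m * INR r ^ 2 / INR n).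
set (w := INR r * INR m / INR n); set (x := INR n / INR r ^ 2) in hm.
assert (hx : 4 <= x).
{ unfold x; apply (Rmult_le_reg_r (INR r ^ 2)); [lra |].
  replace (INR n / INR r ^ 2 * INR r ^ 2) with (INR n) by (field; lra); lra. }
assert (hxk : x <= exp 1 ^ k) by (apply ceil_log_exp; fold x; lra).
assert (hk : (1 <= k)%nat)
  by (apply ceil_log_pos; rewrite <- ln_1; apply ln_increasing; fold x; lra).
assert (htau : tau = y ^ 2 / x) by (unfold tau, y, x; field; lra).
assert (hy : 0 <= y <= K).
{ split; [apply Rdiv_nonneg; [apply Rmult_le_pos | ]; lra |].
  replace y with (INR m / x) by (unfold y, x; field; lra).
  apply (Rmult_le_reg_r x); [lra |]; replace (INR m / x * x) with (INR m) by (field; lra); lra. }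
assert (hwy : INR r * w = y) by (unfold w, y; field; lra).
assert (hw : 0 <= w <= K).
{ split; [apply Rdiv_nonneg; [apply Rmult_le_pos | ]; lra | nra]. }
assert (htail1 := hD k x y ltac:(lra) hxk hy).
assert (htail2 := hE k x w (INR r) hk ltac:(lra) hxk hw).
replace (INR n) with (x * INR r ^ 2) at 1 by (unfold x; field; lra).
rewrite hwy, <- htau in htail2; rewrite <- htau in htail1; fold F in htail1, htail2.
assert (htau0 : 0 <= tau) by (rewrite htau; apply Rdiv_nonneg; [apply pow2_ge_0 | lra]).
assert (hy2 : y ^ 2 <= K ^ 2) by (apply pow_incr; lra).
nra.
Qed.

Lemma large_n_regime K n r m : (3 <= r)%nat -> INR r <= / 2 * sqrt (INR n) ->
  Rabs K + 1 <= INR n -> INR m <= K * (INR n / INR r ^ 2) ->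
  3 <= INR r /\ 4 * INR r ^ 2 <= INR n /\ (r <= n)%nat /\
  INR m * INR r ^ 2 <= INR n * (INR n - 1) /\ INR m <= Rabs K * (INR n / INR r ^ 2).
Proof.
intros hr3 hsq hKn hm.
assert (h3 : 3 <= INR r) by (apply (le_INR 3) in hr3; simpl in hr3; lra).
pose proof (sqrt_pos (INR n)) as hs; pose proof (sqrt_sqrt (INR n) (pos_INR n)) as hss.
assert (h4 : 4 * INR r ^ 2 <= INR n) by nra.
assert (hr2 : 0 < INR r ^ 2) by (apply pow_lt; lra).
assert (hmK : INR m <= Rabs K * (INR n / INR r ^ 2)).
{ apply Rle_trans with (1 := hm), Rmult_le_compat_r; [| apply Rle_abs].
  apply Rdiv_nonneg; [apply pos_INR | exact hr2]. }
assert (hmr : INR m * INR r ^ 2 <= Rabs K * INR n).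
{ apply Rle_trans with (Rabs K * (INR n / INR r ^ 2) * INR r ^ 2).
  - apply Rmult_le_compat_r; lra.
  - right; field; lra. }
pose proof (Rabs_pos K).
repeat split; [exact h3 | exact h4 | apply INR_le; nra | nra | exact hmK].
Qed.

Theorem theorem7p2 (r m : nat -> nat)
  (hr3 : forall n, (3 <= r n)%nat)
  (hro : forall eps, 0 < eps -> exists N, forall n, (N <= n)%nat ->
           INR (r n) <= eps * sqrt (INR n))
  (hmlow : forall n, ln (INR n / INR (r n) ^ 2) <= INR (m n))
  (hmup : exists K, exists N, forall n, (N <= n)%nat ->
           INR (m n) <= K * (INR n / INR (r n) ^ 2)) :
  exists C, exists N, forall n, (N <= n)%nat ->
    Rabs (INR (card_Hplus n (r n) (m n)) / INR (card_H n (r n) (m n)) - 1)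
      <= C * (INR (r n) ^ 6 * INR (m n) ^ 2 / INR n ^ 3) /\
    Rabs (INR (card_Hplusplus n (r n) (m n)) / INR (card_H n (r n) (m n)) - 1)
      <= C * (INR (r n) ^ 6 * INR (m n) ^ 2 / INR n ^ 3).
Proof.
destruct hmup as [K [N1 hK]].
destruct (expected_configs_small (Rabs K) (Rabs_pos K)) as [C hC].
destruct (hro (/ 2) ltac:(lra)) as [N2 hN2].
destruct (INR_unbounded (Rabs K + 1)) as [N3 hN3].
exists C, (Nat.max N1 (Nat.max N2 N3)); intros n hn.
assert (hKn : Rabs K + 1 <= INR n) by (pose proof (le_INR N3 n ltac:(lia)); lra).
destruct (large_n_regime K n (r n) (m n) (hr3 n) (hN2 n ltac:(lia)) hKn (hK n ltac:(lia)))
  as [h3 [h4 [hrn [hmn hm]]]].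
destruct (HypergraphCounting.relative_errors (hr3 n) hrn hmn) as [e1 e2].
pose proof (hC n (r n) (m n) h3 h4 hm) as hX.
split; lra.
Qed.
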